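(* Let $A=[a_{ij}]\in\{0,1\}^{N\times N}$ be the adjacency matrix of a static contact graph on nodes $\{1,\dots,N\}$ (with $a_{ii}=0$), let $\beta_0>0$, $\delta>0$, $\kappa>0$, $0\le\beta_a<\beta_0$, and set \[ \beta_{eq}=\beta_0\frac{\beta_a/\kappa}{1+\beta_a/\kappa}+\beta_a\frac{1}{1+\beta_a/\kappa}. \] If $(p_i^{ss},q_i^{ss})_{i=1}^N$ is a steady state of the SAIS system \[ \dot p_i=\beta_0(1-p_i-q_i)\sum_{j=1}^N a_{ij}p_j+\beta_a q_i\sum_{j=1}^N a_{ij}p_j-\delta p_i,\qquad \dot q_i=\kappa(1-p_i-q_i)\sum_{j=1}^N a_{ij}p_j-\beta_a q_i\sum_{j=1}^N a_{ij}p_j, \] then its infection probabilities satisfy the steady-state equations of the N-intertwined SIS model $\dot p_i=\beta(1-p_i)\sum_j a_{ij}p_j-\delta p_i$ with infection rate $\beta=\beta_{eq}$, namely \[ \beta_{eq}(1-p_i^{ss})\sum_{j=1}^N a_{ij}p_j^{ss}-\delta p_i^{ss}=0,\qquad\text{equivalently}\qquad \frac{\beta_{eq}}{\delta}\sum_{j=1}^N a_{ij}p_j^{ss}=\frac{p_i^{ss}}{1-p_i^{ss}}\ (p_i^{ss}\neq1), \] for all $i\in\{1,\dots,N\}$.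
   Context: $p_i$ and $q_i$ are the (mean-field) probabilities that individual $i$ is infected and alert; $a_{ij}=1$ iff individual $j$ is a neighbor of individual $i$. $\beta_0$: infection rate of susceptible individuals; $\beta_a$: infection rate of alert individuals; $\kappa$: alerting rate; $\delta$: curing rate. *)

From mathcomp Require Import all_boot all_order all_algebra.
Set Implicit Arguments. Unset Strict Implicit. Unset Printing Implicit Defensive.
Import Order.TTheory GRing.Theory Num.Theory.
Local Open Scope ring_scope.

Definition adjacency01 (R : numDomainType) (N : nat) (A : 'M[R]_N) : Prop :=
  (forall i j, A i j = 0 \/ A i j = 1) /\ (forall i, A i i = 0).

Definition nbsum (R : numDomainType) (N : nat) (A : 'M[R]_N) (p : 'I_N -> R)
  (i : 'I_N) : R := \sum_(j < N) A i j * p j.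

Definition SAIS_dp (R : numDomainType) (N : nat) (A : 'M[R]_N)
  (beta0 betaa delta : R) (p q : 'I_N -> R) (i : 'I_N) : R :=
  beta0 * (1 - p i - q i) * nbsum A p i + betaa * q i * nbsum A p i - delta * p i.

Definition SAIS_dq (R : numDomainType) (N : nat) (A : 'M[R]_N)
  (kappa betaa : R) (p q : 'I_N -> R) (i : 'I_N) : R :=
  kappa * (1 - p i - q i) * nbsum A p i - betaa * q i * nbsum A p i.

Definition SAIS_steady (R : numDomainType) (N : nat) (A : 'M[R]_N)
  (beta0 betaa kappa delta : R) (p q : 'I_N -> R) : Prop :=
  forall i, SAIS_dp A beta0 betaa delta p q i = 0 /\ SAIS_dq A kappa betaa p q i = 0.

Definition beta_eq (R : numFieldType) (beta0 betaa kappa : R) : R :=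
  beta0 * ((betaa / kappa) / (1 + betaa / kappa)) + betaa * (1 / (1 + betaa / kappa)).

(* At every node the SIS right-hand side with rate [beta_eq] is a fixed linear
   combination of the two SAIS right-hand sides, dp + (betaa - beta0)/(kappa + betaa) dq,
   so it vanishes at any SAIS steady state. *)
From mathcomp Require Import all_boot all_order all_algebra.
From mathcomp Require Import ring.
Set Implicit Arguments. Unset Strict Implicit. Unset Printing Implicit Defensive.
Import Order.TTheory GRing.Theory Num.Theory.
Local Open Scope ring_scope.

Definition SIS_dp (R : numDomainType) (N : nat) (A : 'M[R]_N)
  (beta delta : R) (p : 'I_N -> R) (i : 'I_N) : R :=
  beta * (1 - p i) * nbsum A p i - delta * p i.

Lemma beta_eqE (R : numFieldType) (beta0 betaa kappa : R) :
  kappa != 0 -> kappa + betaa != 0 ->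
  beta_eq beta0 betaa kappa = betaa * (beta0 + kappa) / (kappa + betaa).
Proof.
move=> k0 kb0; have kb0' : 1 + betaa / kappa != 0.
  by rewrite -(mulfK k0 1) mul1r -mulrDl mulf_neq0 // ?invr_eq0 // addrC.
by rewrite /beta_eq; field; rewrite k0 kb0 /= -?kb0'.
Qed.

Lemma SIS_dp_SAIS (R : numFieldType) (N : nat) (A : 'M[R]_N)
    (beta0 betaa kappa delta : R) (p q : 'I_N -> R) (i : 'I_N) :
  kappa != 0 -> kappa + betaa != 0 ->
  SIS_dp A (beta_eq beta0 betaa kappa) delta p i =
  SAIS_dp A beta0 betaa delta p q i
    + (betaa - beta0) / (kappa + betaa) * SAIS_dq A kappa betaa p q i.
Proof.
move=> k0 kb0; rewrite /SIS_dp /SAIS_dp /SAIS_dq beta_eqE //.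
by field.
Qed.

Lemma SIS_steady_ratio (R : fieldType) (beta delta P S : R) :
  delta != 0 -> P != 1 ->
  beta * (1 - P) * S - delta * P = 0 -> beta / delta * S = P / (1 - P).
Proof.
move=> d0 P1 /eqP; rewrite subr_eq0 => /eqP eqS.
have P1' : 1 - P != 0 by rewrite subr_eq0 eq_sym.
apply: (mulIf P1'); rewrite mulfVK //; apply: (mulfI d0).
by rewrite -eqS; field.
Qed.

Theorem theorem4 (R : realFieldType) (N : nat) (A : 'M[R]_N)
  (beta0 betaa kappa delta : R) (p q : 'I_N -> R) :
  adjacency01 A ->
  0 < beta0 -> 0 < delta -> 0 < kappa -> 0 <= betaa -> betaa < beta0 ->
  SAIS_steady A beta0 betaa kappa delta p q ->
  forall i : 'I_N,
    beta_eq beta0 betaa kappa * (1 - p i) * nbsum A p i - delta * p i = 0 /\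
    (p i != 1 ->
       beta_eq beta0 betaa kappa / delta * nbsum A p i = p i / (1 - p i)).
Proof.
move=> _ _ d_gt0 k_gt0 ba_ge0 _ steady i.
have [dp0 dq0] := steady i.
have kb_neq0 : kappa + betaa != 0 by rewrite lt0r_neq0 // ltr_wpDr.
have SIS0 : SIS_dp A (beta_eq beta0 betaa kappa) delta p i = 0.
  rewrite (@SIS_dp_SAIS _ _ A beta0 betaa kappa delta p q i (lt0r_neq0 k_gt0) kb_neq0).
  by rewrite dp0 dq0 mulr0 addr0.
split=> // P1.
exact: SIS_steady_ratio (lt0r_neq0 d_gt0) P1 SIS0.
Qed.
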